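(* Let $0<\beta\le1$. For every $\delta>0$ there exists an instance of $1\mid t_j\mid\sum C_j$ with obligatory tests on which $\beta$-SORT satisfies $\mathit{ALG}/\mathit{OPT}\ge\frac12\left(\sqrt{\frac{\beta+4}{\beta}}+1\right)-\delta$. In particular, the competitive ratio of $1$-SORT is at least the golden ratio $\frac{1+\sqrt5}{2}\approx1.618$.
   Context: Scheduling with obligatory tests: jobs $J=\{1,\dots,n\}$ on a single machine; job $j$ has a known test time $t_j\ge0$ and a processing time $p_j\ge0$ revealed only when its test has been executed. The test must be executed before the processing part (which may start any time later); operations are non-preemptive, one at a time. $C_j$ is the completion time of the processing part of $j$; objective $\sum_jC_j$. $\mathit{OPT}$ is the optimal offline objective value (all tests must also be executed); $\mathit{ALG}$ is the algorithm's value. Algorithm $\beta$-SORT (parameter $\beta>0$): maintain a priority queue of available operations, initially containing the test of every job $j$ with priority $\beta t_j$; repeatedly remove a minimum-priority operation and execute it immediately; after executing the test of $j$, insert the processing part of $j$ with priority $p_j$. *)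

From Stdlib Require Import Reals List.
Import ListNotations.
Open Scope R_scope.

(* An instance of 1 | t_j | sum C_j with obligatory tests: n jobs 0..n-1,
   test times t j and processing times p j (both >= 0). *)

Inductive op : Type := Test (j : nat) | Proc (j : nat).

Definition dur (t p : nat -> R) (o : op) : R :=
  match o with Test j => t j | Proc j => p j end.

Definition avail (n : nat) (done : list op) (o : op) : Prop :=
  match o with
  | Test j => (j < n)%nat /\ ~ In (Test j) done
  | Proc j => (j < n)%nat /\ In (Test j) done /\ ~ In (Proc j) done
  end.

(* A feasible (idle-free, non-preemptive) schedule: an order of all 2n
   operations in which every test precedes the corresponding processing. *)
Definition feasible_order (n : nat) (s : list op) : Prop :=
  length s = (2 * n)%nat /\
  forall k, (k < length s)%nat -> avail n (firstn k s) (nth k s (Test 0)).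

Fixpoint cost_aux (t p : nat -> R) (elapsed : R) (s : list op) : R :=
  match s with
  | [] => 0
  | o :: s' =>
      let e := elapsed + dur t p o in
      (match o with Proc _ => e | Test _ => 0 end) + cost_aux t p e s'
  end.

Definition sumC (t p : nat -> R) (s : list op) : R := cost_aux t p 0 s.

Definition is_OPT (n : nat) (t p : nat -> R) (v : R) : Prop :=
  (exists s, feasible_order n s /\ sumC t p s = v) /\
  (forall s, feasible_order n s -> v <= sumC t p s).

Definition prio (beta : R) (t p : nat -> R) (o : op) : R :=
  match o with Test j => beta * t j | Proc j => p j end.

(* s is an execution of beta-SORT (with some tie-breaking): at each step
   the executed operation is available and of minimum priority among all
   available operations. *)
Definition beta_sort_run (beta : R) (n : nat) (t p : nat -> R) (s : list op)
  : Prop :=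
  length s = (2 * n)%nat /\
  forall k, (k < length s)%nat ->
    avail n (firstn k s) (nth k s (Test 0)) /\
    forall o, avail n (firstn k s) o ->
      prio beta t p (nth k s (Test 0)) <= prio beta t p o.

From Stdlib Require Import Reals List Lia Lra Psatz Classical ZArith Sorted Permutation.
Import ListNotations.
Open Scope R_scope.

(* Take [K] long jobs with test time just below [1/beta] and unit processing time, and
   about [(rho - 1) K] short jobs with a free test and processing time just above 1.  The
   perturbations make beta-SORT run all tests, then the long processing parts, and only
   then the short ones, while testing and processing the short jobs first and then each
   long job in turn costs only [x^2/2 + x K + (1/beta + 1) K^2/2 + O(K)] for [x] short
   jobs.  Since [rho^2 - rho = 1/beta], the leading part of [ALG - rho OPT] is
   [-(rho - 1)/2 ((rho - 1) K - x)^2], so [ALG/OPT] tends to [rho] as [K] grows. *)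

Definition op_index (o : op) : nat := match o with Test j | Proc j => j end.

Definition all_ops (n : nat) : list op := map Test (seq 0 n) ++ map Proc (seq 0 n).

Lemma in_all_ops n o : In o (all_ops n) <-> (op_index o < n)%nat.
Proof.
  unfold all_ops; rewrite in_app_iff, !in_map_iff.
  destruct o as [j|j]; simpl; split.
  - intros [[i [Hi Hin]]|[i [Hi Hin]]]; try discriminate.
    injection Hi as ->; apply in_seq in Hin; lia.
  - intros Hj; left; exists j; split; [reflexivity|apply in_seq; lia].
  - intros [[i [Hi Hin]]|[i [Hi Hin]]]; try discriminate.
    injection Hi as ->; apply in_seq in Hin; lia.
  - intros Hj; right; exists j; split; [reflexivity|apply in_seq; lia].
Qed.

Lemma length_all_ops n : length (all_ops n) = (2 * n)%nat.
Proof. unfold all_ops; rewrite length_app, !length_map, length_seq; lia. Qed.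

Lemma avail_fresh n q o : avail n q o -> ~ In o q /\ In o (all_ops n).
Proof. rewrite in_all_ops; destruct o; simpl; tauto. Qed.

Lemma nth_In_firstn {A} (s : list A) d i k :
  (i < k)%nat -> (i < length s)%nat -> In (nth i s d) (firstn k s).
Proof.
  revert i k; induction s as [|a s IH]; intros i k Hik Hi; simpl in *; [lia|].
  destruct k as [|k]; [lia|]; destruct i as [|i]; simpl; [now left|].
  right; apply IH; lia.
Qed.

Lemma firstn_succ_nth {A} (s : list A) d i :
  (i < length s)%nat -> firstn (S i) s = firstn i s ++ [nth i s d].
Proof.
  revert i; induction s as [|a s IH]; intros i Hi; simpl in *; [lia|].
  destruct i as [|i]; [reflexivity|]; simpl; f_equal; apply IH; lia.
Qed.

Lemma executed_ops_NoDup n s :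
  (forall k, (k < length s)%nat -> avail n (firstn k s) (nth k s (Test 0))) ->
  NoDup s /\ incl s (all_ops n).
Proof.
  intros Hav; split.
  - apply (NoDup_nth s (Test 0)); intros i j Hi Hj Hij.
    destruct (Nat.lt_trichotomy i j) as [Hlt|[Heq|Hgt]]; [exfalso| exact Heq|exfalso].
    + apply (avail_fresh _ _ _ (Hav j Hj)); rewrite <- Hij; now apply nth_In_firstn.
    + apply (avail_fresh _ _ _ (Hav i Hi)); rewrite Hij; now apply nth_In_firstn.
  - intros x Hx; destruct (In_nth s x (Test 0) Hx) as [k [Hk <-]].
    exact (proj2 (avail_fresh _ _ _ (Hav k Hk))).
Qed.

Lemma feasible_Permutation_all_ops n s : feasible_order n s -> Permutation s (all_ops n).
Proof.
  intros [Hlen Hav]; destruct (executed_ops_NoDup n s Hav) as [Hnd Hincl].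
  apply NoDup_Permutation_bis; [exact Hnd| |exact Hincl].
  rewrite length_all_ops; lia.
Qed.

Lemma beta_sort_run_feasible beta n t p s : beta_sort_run beta n t p s -> feasible_order n s.
Proof. intros [Hlen Hrun]; split; [exact Hlen|]; intros k Hk; apply Hrun, Hk. Qed.

Fixpoint words {A} (alphabet : list A) (L : nat) : list (list A) :=
  match L with
  | O => [[]]
  | S L => flat_map (fun a => map (cons a) (words alphabet L)) alphabet
  end.

Lemma in_words {A} (alphabet s : list A) : incl s alphabet -> In s (words alphabet (length s)).
Proof.
  induction s as [|a s IH]; intros Hs; simpl; [now left|].
  apply in_flat_map; exists a; split; [apply Hs; now left|].
  apply in_map, IH; intros x Hx; apply Hs; now right.
Qed.

Lemma exists_min_on_list {A} (P : A -> Prop) (f : A -> R) l :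
  (exists a, In a l /\ P a) ->
  exists a, In a l /\ P a /\ forall b, In b l -> P b -> f a <= f b.
Proof.
  induction l as [|a l IH]; [intros [x [[] _]]|intros Hex].
  destruct (classic (exists x, In x l /\ P x)) as [Hl|Hl].
  - destruct (IH Hl) as [x [Hx [Px Hmin]]].
    destruct (classic (P a /\ f a <= f x)) as [[Pa Hax]|Hax].
    + exists a; split; [now left|split; [exact Pa|]].
      intros y [<-|Hy] Py; [lra|]; specialize (Hmin y Hy Py); lra.
    + exists x; split; [now right|split; [exact Px|]].
      intros y [<-|Hy] Py; [|now apply Hmin].
      apply Rnot_lt_le; intros Hlt; apply Hax; split; [exact Py|lra].
  - destruct Hex as [x [[<-|Hx] Px]]; [|exfalso; eauto].
    exists a; split; [now left|split; [exact Px|]].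
    intros y [<-|Hy] Py; [lra|exfalso; eauto].
Qed.

Lemma is_OPT_exists n t p s0 : feasible_order n s0 -> exists v, is_OPT n t p v.
Proof.
  intros Hs0.
  assert (Hwords : forall s, feasible_order n s -> In s (words (all_ops n) (2 * n))).
  { intros s Hs; rewrite <- (proj1 Hs); apply in_words.
    intros x Hx; apply (Permutation_in _ (feasible_Permutation_all_ops n s Hs) Hx). }
  destruct (exists_min_on_list (feasible_order n) (sumC t p) (words (all_ops n) (2 * n)))
    as [s [_ [Hs Hmin]]]; [exists s0; auto|].
  exists (sumC t p s); split; [exists s; auto|].
  intros s' Hs'; apply Hmin; auto.
Qed.

Lemma dur_nonneg t p o : (forall j, 0 <= t j /\ 0 <= p j) -> 0 <= dur t p o.
Proof. intros Htp; destruct o as [j|j]; apply Htp. Qed.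

Lemma cost_aux_nonneg t p s e :
  (forall j, 0 <= t j /\ 0 <= p j) -> 0 <= e -> 0 <= cost_aux t p e s.
Proof.
  intros Htp; revert e; induction s as [|o s IH]; intros e He; simpl; [lra|].
  pose proof (dur_nonneg t p o Htp).
  assert (0 <= cost_aux t p (e + dur t p o) s) by (apply IH; lra).
  destruct o; lra.
Qed.

Lemma cost_aux_ge_proc t p s e j :
  (forall j, 0 <= t j /\ 0 <= p j) -> 0 <= e -> In (Proc j) s -> p j <= cost_aux t p e s.
Proof.
  intros Htp; revert e; induction s as [|o s IH]; intros e He Hin; [destruct Hin|].
  pose proof (dur_nonneg t p o Htp).
  pose proof (cost_aux_nonneg t p s (e + dur t p o) Htp ltac:(lra)).
  destruct Hin as [->|Hin]; simpl in *; [lra|].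
  specialize (IH (e + dur t p o) ltac:(lra) Hin); destruct o; lra.
Qed.

(* beta-SORT executes its operations in nondecreasing order of priority as soon as no
   processing part has a smaller priority than its own test: an operation run at step
   i+1 was already available at step i, unless it is the processing part released by
   the test run at step i. *)
Lemma beta_sort_run_prio_le beta n t p s i :
  (forall j, beta * t j <= p j) -> beta_sort_run beta n t p s -> (S i < length s)%nat ->
  prio beta t p (nth i s (Test 0)) <= prio beta t p (nth (S i) s (Test 0)).
Proof.
  intros Htp [_ Hrun] Hi.
  destruct (Hrun i ltac:(lia)) as [_ Hmin]; destruct (Hrun (S i) Hi) as [Hav _].
  rewrite (firstn_succ_nth s (Test 0) i) in Hav by lia.
  destruct (nth (S i) s (Test 0)) as [j|j]; simpl in Hav.
  - apply Hmin; simpl; split; [tauto|].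
    intros Hin; apply (proj2 Hav), in_or_app; now left.
  - destruct Hav as [Hj [Htest Hproc]].
    apply in_app_or in Htest as [Htest|[->|[]]].
    + apply Hmin; simpl; repeat split; auto.
      intros Hin; apply Hproc, in_or_app; now left.
    + apply Htp.
Qed.

Lemma Sorted_of_nth {A} (R : A -> A -> Prop) d (l : list A) :
  (forall i, (S i < length l)%nat -> R (nth i l d) (nth (S i) l d)) -> Sorted R l.
Proof.
  induction l as [|a l IH]; intros H; constructor.
  - apply IH; intros i Hi; apply (H (S i)); simpl; lia.
  - destruct l as [|b l]; constructor; apply (H 0%nat); simpl; lia.
Qed.

Lemma StronglySorted_Permutation_eq (l1 l2 : list nat) :
  StronglySorted le l1 -> StronglySorted le l2 -> Permutation l1 l2 -> l1 = l2.
Proof.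
  revert l2; induction l1 as [|a l1 IH]; intros l2 H1 H2 HP.
  - symmetry; exact (Permutation_nil HP).
  - destruct l2 as [|b l2]; [apply Permutation_length in HP; discriminate|].
    apply StronglySorted_inv in H1 as [H1 Ha]; apply StronglySorted_inv in H2 as [H2 Hb].
    rewrite Forall_forall in Ha, Hb.
    assert (Hab : a = b).
    { destruct (Permutation_in b (Permutation_sym HP) (or_introl eq_refl)) as [->|Hbl];
        [reflexivity|].
      destruct (Permutation_in a HP (or_introl eq_refl)) as [->|Hal]; [reflexivity|].
      specialize (Ha b Hbl); specialize (Hb a Hal); lia. }
    subst b; f_equal; apply IH; auto.
    exact (Permutation_cons_inv HP).
Qed.

Lemma StronglySorted_repeat_app (a L : nat) l :
  StronglySorted le l -> (forall x, In x l -> (a <= x)%nat) ->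
  StronglySorted le (repeat a L ++ l).
Proof.
  intros Hl Ha; induction L as [|L IH]; simpl; [exact Hl|].
  constructor; [exact IH|]; apply Forall_forall; intros x Hx.
  apply in_app_or in Hx as [Hx|Hx]; [apply repeat_spec in Hx; lia|auto].
Qed.

Definition pair_schedule (a L : nat) : list op :=
  flat_map (fun j => [Test j; Proc j]) (seq a L).

Fixpoint runs_from (n : nat) (done s : list op) : Prop :=
  match s with
  | [] => True
  | o :: s' => avail n done o /\ runs_from n (done ++ [o]) s'
  end.

Lemma runs_from_avail n s done k :
  runs_from n done s -> (k < length s)%nat ->
  avail n (done ++ firstn k s) (nth k s (Test 0)).
Proof.
  revert done k; induction s as [|o s IH]; intros done k Hrun Hk; simpl in *; [lia|].
  destruct Hrun as [Ho Hs]; destruct k as [|k]; simpl; [now rewrite app_nil_r|].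
  replace (done ++ o :: firstn k s) with ((done ++ [o]) ++ firstn k s)
    by now rewrite <- app_assoc.
  apply IH; [exact Hs|lia].
Qed.

Lemma runs_from_pair_schedule n a L done :
  (a + L <= n)%nat -> (forall o, In o done -> (op_index o < a)%nat) ->
  runs_from n done (pair_schedule a L).
Proof.
  revert a done; induction L as [|L IH]; intros a done HaL Hdone; [exact I|].
  unfold pair_schedule; simpl; fold (pair_schedule (S a) L).
  assert (Hfresh : forall o, op_index o = a -> ~ In o done)
    by (intros o Ho Hin; specialize (Hdone o Hin); lia).
  split; [split; [lia|now apply Hfresh]|].
  split; [repeat split; [lia|apply in_or_app; right; now left|]|].
  - rewrite in_app_iff; intros [Hin|[Hin|[]]]; [now apply (Hfresh (Proc a))|discriminate].
  - rewrite <- app_assoc; apply IH; [lia|].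
    intros o Ho; apply in_app_or in Ho as [Ho|[<-|[<-|[]]]]; simpl; auto.
    specialize (Hdone o Ho); lia.
Qed.

Lemma pair_schedule_feasible n : feasible_order n (pair_schedule 0 n).
Proof.
  split.
  - unfold pair_schedule; induction n as [|n IH]; [reflexivity|].
    rewrite seq_S, flat_map_app, length_app, IH; simpl; lia.
  - intros k Hk; apply (runs_from_avail n _ []); [|exact Hk].
    apply runs_from_pair_schedule; [lia|intros o []].
Qed.

Section ShortLongInstance.

Variables (m k : nat) (beta b d : R).

Definition test_time (j : nat) : R := if (j <? m)%nat then 0 else b.
Definition proc_time (j : nat) : R := if (j <? m)%nat then d else 1.

(* Classes numbered in the order in which beta-SORT runs them. *)
Definition op_class (o : op) : nat :=
  match o with
  | Test j => if (j <? m)%nat then 0 else 1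
  | Proc j => if (j <? m)%nat then 3 else 2
  end.

Definition class_dur (c : nat) : R :=
  match c with O => 0 | 1%nat => b | 2%nat => 1 | _ => d end.

Definition is_proc_class (c : nat) : bool := (2 <=? c)%nat.

Fixpoint class_cost (e : R) (l : list nat) : R :=
  match l with
  | [] => 0
  | c :: l' =>
      (if is_proc_class c then e + class_dur c else 0) + class_cost (e + class_dur c) l'
  end.

Lemma cost_aux_class s e :
  cost_aux test_time proc_time e s = class_cost e (map op_class s).
Proof.
  revert e; induction s as [|o s IH]; intros e; [reflexivity|]; simpl.
  replace (dur test_time proc_time o) with (class_dur (op_class o))
    by (destruct o; unfold test_time, proc_time; simpl; now destruct (_ <? m)%nat).
  rewrite IH; f_equal; destruct o; simpl; now destruct (_ <? m)%nat.
Qed.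

Lemma class_cost_repeat c L e l :
  class_cost e (repeat c L ++ l) =
  (if is_proc_class c then INR L * e + class_dur c * INR L * (INR L + 1) / 2 else 0)
  + class_cost (e + INR L * class_dur c) l.
Proof.
  revert e; induction L as [|L IH]; intros e; simpl repeat; simpl app.
  - simpl INR; replace (e + 0 * class_dur c) with e by ring.
    destruct (is_proc_class c); lra.
  - cbn [class_cost]; rewrite IH, S_INR.
    replace (e + class_dur c + INR L * class_dur c) with (e + (INR L + 1) * class_dur c)
      by ring.
    destruct (is_proc_class c); field.
Qed.

Fixpoint class_pairs (c1 c2 L : nat) : list nat :=
  match L with O => [] | S L => c1 :: c2 :: class_pairs c1 c2 L end.

Lemma class_cost_pairs c1 c2 L e l :
  is_proc_class c1 = false -> is_proc_class c2 = true ->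
  class_cost e (class_pairs c1 c2 L ++ l) =
  INR L * e + (class_dur c1 + class_dur c2) * INR L * (INR L + 1) / 2
  + class_cost (e + INR L * (class_dur c1 + class_dur c2)) l.
Proof.
  intros H1 H2; revert e; induction L as [|L IH]; intros e; simpl app.
  - simpl INR; replace (e + 0 * (class_dur c1 + class_dur c2)) with e by ring; lra.
  - cbn [class_cost]; rewrite H1, H2, IH, S_INR.
    replace (e + class_dur c1 + class_dur c2 + INR L * (class_dur c1 + class_dur c2))
      with (e + (INR L + 1) * (class_dur c1 + class_dur c2)) by ring.
    field.
Qed.

Lemma map_op_class_seq (f : nat -> op) c a L :
  (forall j, (a <= j < a + L)%nat -> op_class (f j) = c) ->
  map op_class (map f (seq a L)) = repeat c L.
Proof.
  revert a; induction L as [|L IH]; intros a Hc; [reflexivity|]; simpl.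
  rewrite Hc, IH; [reflexivity| |]; intros; try apply Hc; lia.
Qed.

Lemma map_op_class_pair_schedule c1 c2 a L :
  (forall j, (a <= j < a + L)%nat -> op_class (Test j) = c1 /\ op_class (Proc j) = c2) ->
  map op_class (pair_schedule a L) = class_pairs c1 c2 L.
Proof.
  revert a; induction L as [|L IH]; intros a Hc; [reflexivity|].
  unfold pair_schedule; cbn [seq flat_map app map]; fold (pair_schedule (S a) L).
  destruct (Hc a ltac:(lia)) as [-> ->]; rewrite IH; [reflexivity|].
  intros j Hj; apply Hc; lia.
Qed.

Definition sorted_classes : list nat :=
  repeat 0%nat m ++ repeat 1%nat k ++ repeat 2%nat k ++ repeat 3%nat m.

Lemma map_op_class_all_ops :
  Permutation (map op_class (all_ops (m + k))) sorted_classes.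
Proof.
  unfold all_ops, sorted_classes; rewrite seq_app, !map_app.
  rewrite (map_op_class_seq Test 0), (map_op_class_seq Test 1),
    (map_op_class_seq Proc 3), (map_op_class_seq Proc 2);
    try (intros j Hj; simpl; destruct (Nat.ltb_spec j m); lia).
  rewrite <- app_assoc; do 2 apply Permutation_app_head; apply Permutation_app_comm.
Qed.

Definition alg_value (K x : R) : R :=
  K * (K * b) + K * (K + 1) / 2 + x * (K * b + K) + d * x * (x + 1) / 2.

Definition opt_bound (K x : R) : R :=
  d * x * (x + 1) / 2 + K * (x * d) + (b + 1) * K * (K + 1) / 2.

Lemma pair_schedule_cost :
  sumC test_time proc_time (pair_schedule 0 (m + k)) = opt_bound (INR k) (INR m).
Proof.
  unfold sumC, pair_schedule; rewrite cost_aux_class, seq_app, flat_map_app.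
  fold (pair_schedule 0 m) (pair_schedule (0 + m) k); rewrite map_app.
  rewrite (map_op_class_pair_schedule 0 3), (map_op_class_pair_schedule 1 2);
    try (intros j Hj; simpl; destruct (Nat.ltb_spec j m); split; lia).
  rewrite class_cost_pairs, <- (app_nil_r (class_pairs 1 2 k)), class_cost_pairs
    by reflexivity.
  unfold opt_bound; simpl; field.
Qed.

Lemma instance_OPT :
  0 <= b -> 0 < d -> (0 < m + k)%nat ->
  exists v, is_OPT (m + k) test_time proc_time v /\ 0 < v /\ v <= opt_bound (INR k) (INR m).
Proof.
  intros Hb Hd Hn.
  assert (Hnonneg : forall j, 0 <= test_time j /\ 0 <= proc_time j)
    by (intros j; unfold test_time, proc_time; destruct (j <? m)%nat; lra).
  destruct (is_OPT_exists (m + k) test_time proc_time _ (pair_schedule_feasible (m + k)))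
    as [v [[s [Hs <-]] Hmin]].
  exists (sumC test_time proc_time s); split; [split; [exists s; auto|exact Hmin]|split].
  - apply Rlt_le_trans with (proc_time 0).
    + unfold proc_time; destruct (0 <? m)%nat; lra.
    + apply cost_aux_ge_proc; [exact Hnonneg|lra|].
      apply (Permutation_in _ (Permutation_sym (feasible_Permutation_all_ops _ _ Hs))).
      apply in_all_ops; exact Hn.
  - rewrite <- pair_schedule_cost; apply Hmin, pair_schedule_feasible.
Qed.

Hypothesis beta_b_lt_1 : 0 < beta * b < 1.
Hypothesis d_gt_1 : 1 < d.

Lemma op_class_le_of_prio o1 o2 :
  prio beta test_time proc_time o1 <= prio beta test_time proc_time o2 ->
  (op_class o1 <= op_class o2)%nat.
Proof.
  destruct o1 as [i|i], o2 as [j|j]; unfold prio, test_time, proc_time, op_class;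
    destruct (i <? m)%nat, (j <? m)%nat; intros H; lia || (exfalso; lra).
Qed.

Lemma beta_sort_run_classes s :
  beta_sort_run beta (m + k) test_time proc_time s -> map op_class s = sorted_classes.
Proof.
  intros Hrun.
  assert (Hsorted : Sorted le (map op_class s)).
  { apply (Sorted_of_nth _ (op_class (Test 0))); rewrite length_map; intros i Hi.
    rewrite !map_nth.
    apply op_class_le_of_prio, (beta_sort_run_prio_le beta (m + k)); [|exact Hrun|exact Hi].
    intros j; unfold test_time, proc_time; destruct (j <? m)%nat; lra. }
  apply StronglySorted_Permutation_eq.
  - exact (Sorted_StronglySorted Nat.le_trans Hsorted).
  - unfold sorted_classes; rewrite <- (app_nil_r (repeat 3%nat m)).
    repeat apply StronglySorted_repeat_app; try constructor;
      intros x Hx; repeat (apply in_app_or in Hx as [Hx|Hx]);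
      first [destruct Hx|apply repeat_spec in Hx; lia].
  - eapply Permutation_trans; [|exact map_op_class_all_ops].
    apply Permutation_map, feasible_Permutation_all_ops.
    exact (beta_sort_run_feasible _ _ _ _ _ Hrun).
Qed.

Lemma beta_sort_run_cost s :
  beta_sort_run beta (m + k) test_time proc_time s ->
  sumC test_time proc_time s = alg_value (INR k) (INR m).
Proof.
  intros Hrun; unfold sumC; rewrite cost_aux_class, beta_sort_run_classes by exact Hrun.
  unfold sorted_classes; rewrite <- (app_nil_r (repeat 3%nat m)), !class_cost_repeat.
  unfold alg_value; simpl; field.
Qed.

End ShortLongInstance.

Definition opt_leading (r K x : R) : R := x * x / 2 + K * x + (r + 1) * K * K / 2.

Lemma alg_value_perturbed_ge r rho K x :
  rho * rho - rho = r -> 1 < rho -> 0 < K -> 0 <= x -> x <= (rho - 1) * K < x + 1 ->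
  rho * opt_leading r K x - (rho - 1) / 2 - K / 2 - x / 2
  <= alg_value (r - / K) (1 + / K) K x.
Proof.
  intros Hr Hrho HK Hx0 [Hx1 Hx2].
  assert (Halg : alg_value (r - / K) (1 + / K) K x
                 = K * K * r + K * K / 2 + x * K * (r + 1) + x * x / 2
                   - K / 2 - x / 2 + / K * (x * (x + 1)) / 2)
    by (unfold alg_value; field; lra).
  assert (Hsquare : K * K * r + K * K / 2 + x * K * (r + 1) + x * x / 2 - rho * opt_leading r K x
                    = - (rho - 1) / 2 * (((rho - 1) * K - x) * ((rho - 1) * K - x)))
    by (unfold opt_leading; rewrite <- Hr; field).
  assert (Hsq : (rho - 1) / 2 * (((rho - 1) * K - x) * ((rho - 1) * K - x)) <= (rho - 1) / 2).
  { rewrite <- (Rmult_1_r ((rho - 1) / 2)) at 2; apply Rmult_le_compat_l; [lra|].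
    rewrite <- (Rmult_1_r 1); apply Rmult_le_compat; lra. }
  assert (0 <= / K * (x * (x + 1)))
    by (apply Rmult_le_pos; [apply Rlt_le, Rinv_0_lt_compat; lra|apply Rmult_le_pos; lra]).
  lra.
Qed.

Lemma opt_bound_perturbed_bounds r rho K x :
  1 <= r -> 1 < rho -> 2 <= K -> 0 <= x -> x <= (rho - 1) * K ->
  (K * K <= opt_leading r K x <= opt_bound (r - / K) (1 + / K) K x) /\
  opt_bound (r - / K) (1 + / K) K x <= opt_leading r K x + K * (rho * rho + 3 * rho + r).
Proof.
  intros Hr1 Hrho HK Hx0 Hx1.
  set (e := / K).
  assert (HeK : e * K = 1) by (unfold e; field; lra).
  assert (He : 0 < e) by (unfold e; apply Rinv_0_lt_compat; lra).
  assert (Hopt : opt_bound (r - e) (1 + e) K x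
                 = opt_leading r K x + 3 * x / 2 + e * (x * x) / 2 + e * x / 2 + r * K / 2 - 1 / 2)
    by (unfold opt_bound, opt_leading, e; field; lra).
  assert (Hex : e * x <= e * ((rho - 1) * K)) by (apply Rmult_le_compat_l; lra).
  assert (Hexx : e * (x * x) <= e * (((rho - 1) * K) * ((rho - 1) * K)))
    by (apply Rmult_le_compat_l; [lra|apply Rmult_le_compat; lra]).
  replace (e * ((rho - 1) * K)) with ((rho - 1) * (e * K)) in Hex by ring.
  replace (e * (((rho - 1) * K) * ((rho - 1) * K))) with ((rho - 1) * ((rho - 1) * K) * (e * K))
    in Hexx by ring.
  rewrite HeK, Rmult_1_r in Hex, Hexx.
  assert (0 <= e * (x * x)) by (apply Rmult_le_pos; [lra|apply Rmult_le_pos; lra]).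
  assert (0 <= e * x) by (apply Rmult_le_pos; lra).
  assert (rho * 2 <= rho * K) by (apply Rmult_le_compat_l; lra).
  assert (1 * 2 <= r * K) by (apply Rmult_le_compat; lra).
  assert (0 <= rho * rho * K) by (apply Rmult_le_pos; [apply Rmult_le_pos|]; lra).
  assert (0 <= x * x) by (apply Rmult_le_pos; lra).
  assert (0 <= K * x) by (apply Rmult_le_pos; lra).
  assert (0 <= (r - 1) * (K * K)) by (apply Rmult_le_pos; [|apply Rmult_le_pos]; lra).
  rewrite Hopt; unfold opt_leading in *; repeat split; lra.
Qed.

Lemma opt_bound_scaled_le_alg_value r rho delta K x :
  rho * rho - rho = r -> 1 <= r -> 1 < rho -> 2 <= K -> 0 < delta ->
  rho * (rho * rho + 3 * rho + r) + 2 * rho + 1 <= K * delta ->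
  0 <= x -> x <= (rho - 1) * K < x + 1 ->
  (rho - delta) * opt_bound (r - / K) (1 + / K) K x <= alg_value (r - / K) (1 + / K) K x.
Proof.
  intros Hr Hr1 Hrho HK Hdelta HKdelta Hx0 Hx.
  pose proof (alg_value_perturbed_ge r rho K x Hr Hrho ltac:(lra) Hx0 Hx) as Halg.
  destruct (opt_bound_perturbed_bounds r rho K x Hr1 Hrho HK Hx0 (proj1 Hx)) as [[HQ HOQ] HOM].
  set (O := opt_bound (r - / K) (1 + / K) K x) in *.
  set (Q := opt_leading r K x) in *.
  set (M := rho * rho + 3 * rho + r) in *.
  assert (rho * O <= rho * (Q + K * M)) by (apply Rmult_le_compat_l; lra).
  assert (delta * (K * K) <= delta * O) by (apply Rmult_le_compat_l; lra).
  assert (K * (rho * M + 2 * rho + 1) <= K * (K * delta)) by (apply Rmult_le_compat_l; lra).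
  assert (rho * 1 <= rho * K) by (apply Rmult_le_compat_l; lra).
  destruct Hx; rewrite Rmult_minus_distr_r; lra.
Qed.

Lemma ratio_quadratic_root beta rho :
  0 < beta -> rho = / 2 * (sqrt ((beta + 4) / beta) + 1) -> rho * rho - rho = / beta /\ 1 < rho.
Proof.
  intros Hbeta ->.
  assert (HS : sqrt ((beta + 4) / beta) * sqrt ((beta + 4) / beta) = 1 + 4 / beta).
  { rewrite sqrt_sqrt; [field; lra|]. apply Rlt_le, Rdiv_lt_0_compat; lra. }
  assert (H4 : 0 < 4 / beta) by (apply Rdiv_lt_0_compat; lra).
  pose proof (sqrt_pos ((beta + 4) / beta)).
  split; [|nra].
  replace (/ beta) with ((1 + 4 / beta - 1) / 4) by (field; lra).
  rewrite <- HS; field.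
Qed.

Lemma nat_floor y : 0 <= y -> exists m : nat, INR m <= y < INR m + 1.
Proof.
  intros Hy; destruct (base_Int_part y) as [Hle Hgt].
  assert (Hz : (-1 < Int_part y)%Z) by (apply lt_IZR; lra).
  exists (Z.to_nat (Int_part y)); rewrite INR_IZR_INZ, Z2Nat.id by lia; lra.
Qed.

Lemma div_ge_of_mul_le a c v U : 0 < v <= U -> 0 <= c -> a * U <= c -> c / v >= a.
Proof.
  intros Hv Hc HaU; apply Rle_ge, Rmult_le_reg_r with v; [lra|].
  unfold Rdiv; rewrite Rmult_assoc, Rinv_l, Rmult_1_r by lra.
  destruct (Rle_or_lt 0 a); nra.
Qed.

Lemma beta_sort_lower_bound beta : 0 < beta <= 1 ->
  forall delta : R, 0 < delta ->
  exists (n : nat) (t p : nat -> R),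
    (forall j, (j < n)%nat -> 0 <= t j /\ 0 <= p j) /\
    exists OPT : R, is_OPT n t p OPT /\ 0 < OPT /\
      forall s, beta_sort_run beta n t p s ->
        sumC t p s / OPT >= / 2 * (sqrt ((beta + 4) / beta) + 1) - delta.
Proof.
  intros [Hb0 Hb1] delta Hdelta.
  set (rho := / 2 * (sqrt ((beta + 4) / beta) + 1)).
  destruct (ratio_quadratic_root beta rho Hb0 eq_refl) as [Hrho Hrho1].
  assert (Hr1 : 1 <= / beta) by (rewrite <- Rinv_1; apply Rinv_le_contravar; lra).
  destruct (INR_archimed delta (rho * (rho * rho + 3 * rho + / beta) + 2 * rho + 1) Hdelta)
    as [N HN].
  set (K := INR (N + 2)).
  assert (HK : K = INR N + 2) by (unfold K; rewrite plus_INR; reflexivity).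
  assert (HK2 : 2 <= K) by (pose proof (pos_INR N); lra).
  assert (HKdelta : rho * (rho * rho + 3 * rho + / beta) + 2 * rho + 1 <= K * delta) by nra.
  destruct (nat_floor ((rho - 1) * K)) as [m Hm]; [nra|].
  set (b := / beta - / K); set (d := 1 + / K).
  assert (HbK : 0 < / K <= / 2)
    by (split; [apply Rinv_0_lt_compat|apply Rinv_le_contravar]; lra).
  assert (Hbeta_b : 0 < beta * b < 1).
  { replace (beta * b) with (1 - beta * / K) by (unfold b; field; lra).
    assert (0 < beta * / K <= / 2) by (split; [apply Rmult_lt_0_compat|]; nra). lra. }
  assert (Hnonneg : forall j, 0 <= test_time m b j /\ 0 <= proc_time m d j)
    by (intros j; unfold test_time, proc_time, b, d; destruct (j <? m)%nat; lra).
  exists (m + (N + 2))%nat, (test_time m b), (proc_time m d); split; [intros j _; apply Hnonneg|].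
  destruct (instance_OPT m (N + 2) b d) as [v [Hopt [Hv Hvub]]];
    [unfold b; lra|unfold d; lra|lia|].
  fold K in Hvub; exists v; split; [exact Hopt|split; [exact Hv|]].
  intros s Hrun; apply div_ge_of_mul_le with (opt_bound b d K (INR m)); [lra| |].
  - apply cost_aux_nonneg; [exact Hnonneg|lra].
  - rewrite (beta_sort_run_cost m (N + 2) beta b d Hbeta_b ltac:(unfold d; lra) s Hrun).
    apply opt_bound_scaled_le_alg_value; auto; try lra; apply pos_INR.
Qed.

Theorem mainTheorem12 :
  (forall beta : R, 0 < beta <= 1 ->
   forall delta : R, 0 < delta ->
   exists (n : nat) (t p : nat -> R),
     (forall j, (j < n)%nat -> 0 <= t j /\ 0 <= p j) /\
     exists OPT : R, is_OPT n t p OPT /\ 0 < OPT /\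
       forall s, beta_sort_run beta n t p s ->
         sumC t p s / OPT >= / 2 * (sqrt ((beta + 4) / beta) + 1) - delta)
  /\
  (forall delta : R, 0 < delta ->
   exists (n : nat) (t p : nat -> R),
     (forall j, (j < n)%nat -> 0 <= t j /\ 0 <= p j) /\
     exists OPT : R, is_OPT n t p OPT /\ 0 < OPT /\
       forall s, beta_sort_run 1 n t p s ->
         sumC t p s / OPT >= (1 + sqrt 5) / 2 - delta).
Proof.
  split; [exact beta_sort_lower_bound|].
  replace ((1 + sqrt 5) / 2) with (/ 2 * (sqrt ((1 + 4) / 1) + 1))
    by (replace ((1 + 4) / 1) with 5 by field; field).
  apply beta_sort_lower_bound; lra.
Qed.
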